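(* Let $\mu,\nu$ be $\sigma$-finite invariant measures on $S$ and $\gamma,\delta$ invariant kernels on $S$ such that $$\iint\mathbf 1\{(s,t)\in\cdot\}\,\gamma(s,dt)\,\mu(ds)=\iint\mathbf 1\{(s,t)\in\cdot\}\,\delta(t,ds)\,\nu(dt).$$ Let $v,w:S\to[0,\infty]$ be measurable with $0<\mu_sv<\infty$, $0<\mu_sw<\infty$ for all $s$ and $\frac{\mu_bw}{\mu_bv}=\frac{\mu_{b'}w}{\mu_{b'}v}$ for all $b,b'\in O$, and let $m:S\times S\to[0,\infty]$ be measurable and invariant. Then $$\iint\Delta_v(s,t)w(s)m(s,t)\,\gamma(s,dt)\,\mu(ds)=\iint w(t)m(s,t)\,\delta(t,ds)\,\nu(dt),$$ where $\Delta_v(s,t):=\mu_tv/\mu_sv$.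
   Context: $G$ is a locally compact second countable Hausdorff group, $\lambda$ a left Haar measure. $(S,\mathcal S)$ is a Borel space on which $G$ acts measurably and properly (there is a measurable partition $B_1,B_2,\dots$ of $S$ with $\mu_s(B_n)<\infty$ for all $s,n$), $\mu_s$ being the image of $\lambda$ under $g\mapsto gs$. $O\in\mathcal S$ is a fixed system of orbit representatives. A measure $\mu$ on $S$ is invariant if $\mu(g^{-1}B)=\mu(B)$ for all $g,B$; a $\sigma$-finite kernel $\gamma$ on $S$ is invariant if $\gamma(gs,B)=\gamma(s,g^{-1}B)$; $m$ is invariant if $m(gs,gt)=m(s,t)$. *)

From HB Require Import structures.
From mathcomp Require Import all_boot all_order all_algebra.
From mathcomp Require Import all_classical all_reals all_analysis.
From mathcomp Require Import measurable_realfun.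
Set Implicit Arguments. Unset Strict Implicit. Unset Printing Implicit Defensive.
Import Order.TTheory GRing.Theory Num.Theory.
Local Open Scope classical_set_scope.
Local Open Scope ring_scope.

Notation borel_of G := (g_sigma_algebraType (@open G)).

Definition is_group (G : Type) (mul : G -> G -> G) (inv : G -> G) (e : G) :=
  [/\ forall x y z, mul x (mul y z) = mul (mul x y) z,
      forall x, mul e x = x, forall x, mul x e = x,
      forall x, mul (inv x) x = e & forall x, mul x (inv x) = e].

Definition lcsc_group (G : ptopologicalType) (mul : G -> G -> G) (inv : G -> G)
    (e : G) :=
  is_group mul inv e /\
  [/\ continuous (fun p : G * G => mul p.1 p.2),
      continuous inv,
      hausdorff_space G,
      locally_compact [set: G] & @second_countable G].

(* Left Haar measure: nonzero, left-invariant Borel measure, finite on compact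
   sets (on an LCSC Hausdorff space every such locally finite Borel measure is
   automatically regular, i.e. Radon). *)
Definition left_haar (R : realType) (G : ptopologicalType) (mul : G -> G -> G)
    (lam : set (borel_of G) -> \bar R) :=
  [/\ (forall (g : G) (A : set (borel_of G)), measurable A ->
         lam [set mul g x | x in A] = lam A),
      (forall K : set G, compact K -> (lam K < +oo)%E) &
      (0 < lam setT)%E].

(* (S, 𝒮) is a Borel space: Borel isomorphic to a Borel subset of the reals. *)
Definition borel_space (R : realType) d (S : measurableType d) :=
  exists f : S -> R, [/\ measurable_fun setT f, injective f &
    forall A : set S, measurable A -> measurable (f @` A)].

Definition measurable_action (G : ptopologicalType) (mul : G -> G -> G) (e : G)
    d (S : measurableType d) (act : G -> S -> S) :=
  [/\ forall s, act e s = s,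
      forall g h s, act (mul g h) s = act g (act h s) &
      measurable_fun setT (fun p : borel_of G * S => act p.1 p.2)].

(* mu_s := image of lam under g |-> g s, evaluated on a set / integrated *)
Definition orbit_measure (R : realType) (G : ptopologicalType)
    (lam : set (borel_of G) -> \bar R) d (S : measurableType d)
    (act : G -> S -> S) (s : S) (B : set S) : \bar R :=
  lam (fun g : borel_of G => B (act g s)).

Definition orbit_int (R : realType) (G : ptopologicalType)
    (lam : {measure set (borel_of G) -> \bar R}) d (S : measurableType d)
    (act : G -> S -> S) (s : S) (v : S -> \bar R) : \bar R :=
  (\int[lam]_g v (act g s))%E.

Definition proper_action (R : realType) (G : ptopologicalType)
    (lam : set (borel_of G) -> \bar R) d (S : measurableType d)
    (act : G -> S -> S) :=
  exists B : nat -> set S,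
    [/\ forall n, measurable (B n), trivIset setT B, \bigcup_n B n = setT &
        forall s n, (orbit_measure lam act s (B n) < +oo)%E].

Definition orbit_representatives (G : Type) d (S : measurableType d)
    (act : G -> S -> S) (O : set S) :=
  measurable O /\ forall s : S, exists! b : S, O b /\ exists g, act g s = b.

Definition invariant_measure (R : realType) (G : Type) d (S : measurableType d)
    (act : G -> S -> S) (mu : set S -> \bar R) :=
  forall g (B : set S), measurable B -> mu (act g @^-1` B) = mu B.

Definition sigma_finite_kernel_on (R : realType) d (S : measurableType d)
    (k : R.-ker S ~> S) :=
  exists B : nat -> set S,
    [/\ forall n, measurable (B n), trivIset setT B, \bigcup_n B n = setT &
        forall s n, (k s (B n) < +oo)%E].

Definition invariant_kernel (R : realType) (G : Type) d (S : measurableType d)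
    (act : G -> S -> S) (k : R.-ker S ~> S) :=
  forall g s (B : set S), measurable B -> k (act g s) B = k s (act g @^-1` B).

Definition invariant_fun2 (G : Type) d (S : measurableType d) (T : Type)
    (act : G -> S -> S) (m : S * S -> T) :=
  forall g s t, m (act g s, act g t) = m (s, t).

Definition Delta_v (R : realType) (G : ptopologicalType)
    (lam : {measure set (borel_of G) -> \bar R}) d (S : measurableType d)
    (act : G -> S -> S) (v : S -> \bar R) (s t : S) : \bar R :=
  (fine (orbit_int lam act t v) / fine (orbit_int lam act s v))%:E.

From HB Require Import structures.
From mathcomp Require Import all_boot all_order all_algebra.
From mathcomp Require Import all_classical all_reals all_analysis.
From mathcomp Require Import measurable_realfun.
From mathcomp Require Import unstable.
Import Order.TTheory GRing.Theory Num.Theory.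
Local Open Scope classical_set_scope.
Local Open Scope ring_scope.

Set Implicit Arguments. Unset Strict Implicit. Unset Printing Implicit Defensive.

(* Write [mu_s v] for the orbit integral of [v] at [s] and
   [K b s := \int b (g^-1 s) lam(dg)].  For the density [b := w / mu_. v],
   left invariance of [lam] and Tonelli give [K b s * mu_s v = mu_s w], and
   [K b] is constant on orbits; with the ratio hypothesis, [K b] is a constant
   [c] on all of [S].  Writing [mu_t v] as a Haar integral and moving each
   [h] in [G] through the invariance of [mu], [gam] and [m] gives
     \iint mu_t v * b (r (s, t)) * m (s, t) = \iint v t * K b (r (s, t)) * m (s, t)
   for [r = fst] and [r = snd].  Hence the left-hand side equals
   [c * \iint v t * m (s, t)], which equals [\iint w t * m (s, t)] for the
   measure [mu (ds) gam (s, dt)]; the transport hypothesis, extended from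
   indicators to nonnegative measurable functions, turns this into the
   right-hand side. *)

Section uniformly_sigma_finite_kernel.
Import HBNNSimple.
Local Open Scope ereal_scope.
Context d d' (X : measurableType d) (Y : measurableType d') (R : realType).

Definition uniformly_sigma_finite (l : R.-ker X ~> Y) :=
  exists B : nat -> set Y,
    [/\ forall n, measurable (B n), trivIset setT B, \bigcup_n B n = setT &
        forall x n, l x (B n) < +oo].

Variable l : R.-ker X ~> Y.
Hypothesis l_sf : uniformly_sigma_finite l.

Lemma uniformly_sigma_finite_measure x : sigma_finite setT (l x).
Proof. by have [B [mB _ cB fB]] := l_sf; exists B => // n; split. Qed.

Lemma measurable_kernel_xsection (A : set (X * Y)) : measurable A ->
  measurable_fun setT (fun x => l x (xsection A x)).
Proof.
move=> mA; have [B [mB tB cB fB]] := l_sf.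
have mlB n A' : measurable A' -> measurable_fun setT
    (fun x => mrestr (l x) (mB n) (xsection A' x)).
  have ub x : exists M : R, forall U, measurable U -> mrestr (l x) (mB n) U < M%:E.
    exists (fine (l x (B n)) + 1)%R => U mU; rewrite /mrestr.
    apply: (@le_lt_trans _ _ (l x (B n))); first by rewrite le_measure ?inE//; exact: measurableI.
    by rewrite -[X in X < _]fineK ?lte_fin ?ltrDl// ge0_fin_numE.
  by move=> mA'; have [] := measurable_prod_subset_xsection_kernel ub mA'.
rewrite (_ : (fun x => _) = fun x => \sum_(n <oo) mrestr (l x) (mB n) (xsection A x)).
  by apply: ge0_emeasurable_sum => // n _; exact: mlB.
apply/funext => x; rewrite -[in LHS](setIT (xsection A x)) -cB setI_bigcupr.
rewrite measure_bigcup//; last exact: trivIset_setIl.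
  by apply: eq_eseriesl => n; rewrite in_setT.
by move=> n _; apply: measurableI => //; exact: measurable_xsection.
Qed.

Lemma measurable_fun_integral_uniformly_sigma_finite (F : X * Y -> \bar R) :
  (forall z, 0 <= F z) -> measurable_fun setT F ->
  measurable_fun setT (fun x => \int[l x]_y F (x, y)).
Proof.
move=> F0 mF; pose k_ := nnsfun_approx measurableT mF.
apply: (measurable_fun_xsection_integral F l k_).
- by move=> a b ab; exact/nd_nnsfun_approx.
- by move=> z; exact/cvg_nnsfun_approx.
- move=> n r; apply: measurable_kernel_xsection.
  by rewrite -[X in measurable X]setTI; exact: measurable_funP.
Qed.

End uniformly_sigma_finite_kernel.

Section kernel_fst.
Context d d' d'' (X : measurableType d) (Y : measurableType d')
  (Z : measurableType d'') (R : realType).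
Variable l : R.-ker X ~> Y.

Definition kfst : X * Z -> {measure set Y -> \bar R} := fun p => l p.1.

Let measurable_kfst U : measurable U -> measurable_fun setT (kfst ^~ U).
Proof. by move=> mU; exact: (measurableT_comp (measurable_kernel l U mU)). Qed.

HB.instance Definition _ := isKernel.Build _ _ _ _ R kfst measurable_kfst.

Lemma uniformly_sigma_finite_kfst :
  uniformly_sigma_finite l -> uniformly_sigma_finite kfst.
Proof. by move=> [B [mB tB cB fB]]; exists B; split=> // -[x z] n; exact: fB. Qed.

End kernel_fst.

(* A sigma-finite measure packed as a [{sigma_finite_measure}] instance, so
   that the library's Tonelli theorem applies to it. *)
Definition sigma_finite_measure_of d (T : measurableType d) (R : realType)
  (m : {measure set T -> \bar R}) (_ : sigma_finite setT m) : set T -> \bar R := m.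
HB.instance Definition _ d T R m h := Measure.on (@sigma_finite_measure_of d T R m h).
HB.instance Definition _ d T R m h :=
  @Measure_isSigmaFinite.Build d T R (@sigma_finite_measure_of d T R m h) h.

Section tonelli.
Local Open Scope ereal_scope.
Context d1 d2 (T1 : measurableType d1) (T2 : measurableType d2) (R : realType).
Variables (m1 : {measure set T1 -> \bar R}) (m2 : {measure set T2 -> \bar R}).
Hypotheses (m1_sf : sigma_finite setT m1) (m2_sf : sigma_finite setT m2).
Variable f : T1 * T2 -> \bar R.
Hypotheses (mf : measurable_fun setT f) (f0 : forall z, 0 <= f z).

Lemma measurable_fun_integral_sigma_finite :
  measurable_fun setT (fun x => \int[m2]_y f (x, y)).
Proof.
exact: (@measurable_fun_fubini_tonelli_F _ _ _ _ _
  (sigma_finite_measure_of m2_sf) f mf f0).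
Qed.

Lemma tonelli_sigma_finite :
  \int[m1]_x \int[m2]_y f (x, y) = \int[m2]_y \int[m1]_x f (x, y).
Proof.
exact: (@fubini_tonelli _ _ _ _ _ (sigma_finite_measure_of m1_sf)
  (sigma_finite_measure_of m2_sf) f mf f0).
Qed.

End tonelli.

Lemma ge0_integral_image d d' (X : measurableType d) (Y : measurableType d')
  (R : realType) (m : {measure set X -> \bar R}) (m' : {measure set Y -> \bar R})
  (phi : X -> Y) : measurable_fun setT phi ->
  (forall A, measurable A -> m (phi @^-1` A) = m' A) ->
  forall f : Y -> \bar R, (forall y, (0 <= f y)%E) -> measurable_fun setT f ->
  (\int[m']_y f y = \int[m]_x f (phi x))%E.
Proof.
move=> mphi phim f f0 mf.
have := ge0_integral_pushforward mphi m measurableT mf (fun y _ => f0 y).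
rewrite preimage_setT => <-.
by apply: eq_measure_integral => // A mA _; rewrite /pushforward -phim.
Qed.

Section iterated_integral.
Import HBNNSimple.
Local Open Scope ereal_scope.
Context d d' (X : measurableType d) (Y : measurableType d') (R : realType).
Variables (m : {measure set X -> \bar R}) (l : R.-ker X ~> Y).
Hypothesis l_sf : uniformly_sigma_finite l.

Definition iint (F : X * Y -> \bar R) := \int[m]_x \int[l x]_y F (x, y).

Lemma iint_nnsfun_comp d'' (Z : measurableType d'') (f : {nnsfun Z >-> R})
    (phi : X * Y -> Z) : measurable_fun setT phi ->
  iint (fun z => (f (phi z))%:E) =
  \sum_(r \in range f) r%:E * iint (fun z => (\1_(f @^-1` [set r]) (phi z))%:E).
Proof.
move=> mphi; pose I (r : R) z : \bar R := (\1_(f @^-1` [set r]) (phi z))%:E.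
have mI r : measurable_fun setT (I r).
  by apply/measurable_EFinP; apply: measurableT_comp => //; exact: measurableT_comp.
have mrI r : measurable_fun setT (fun z => r%:E * I r z) by exact: measurable_funeM.
have rI0 r z : 0 <= r%:E * I r z by exact: nnfun_muleindic_ge0.
have mintI r : measurable_fun setT (fun x => \int[l x]_y I r (x, y)).
  by apply: (measurable_fun_integral_uniformly_sigma_finite l_sf (F := I r)) => // z;
    rewrite lee_fin.
have fE z : (f (phi z))%:E = \sum_(r \in range f) r%:E * I r z.
  by rewrite fimfunE -fsumEFin//; apply: eq_fsbigr => r _; rewrite EFinM.
have inner x : \int[l x]_y (f (phi (x, y)))%:E =
    \sum_(r \in range f) \int[l x]_y (r%:E * I r (x, y)).
  under eq_integral do rewrite fE.
  apply: (ge0_integral_fsum _ _ (f := fun r y => r%:E * I r (x, y))) => // r.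
  exact: (measurable_fun_pair2 x (mrI r)).
rewrite /iint; under eq_integral do rewrite inner.
rewrite ge0_integral_fsum//; last first.
- by move=> r x _; apply: integral_ge0.
- by move=> r; exact: (measurable_fun_integral_uniformly_sigma_finite l_sf (rI0 r) (mrI r)).
apply: eq_fsbigr => _ /set_mem[z _ <-].
have intI0 x : 0 <= \int[l x]_y I (f z) (x, y).
  by apply: integral_ge0 => y _; rewrite lee_fin.
rewrite -(ge0_integralZl_EFin _ _ (fun x _ => intI0 x) (mintI (f z)) (fun_ge0 z))//.
apply: eq_integral => x _; rewrite -(ge0_integralZl_EFin _ _ _
  (measurable_fun_pair2 x (mI (f z))) (fun_ge0 z))// => y _.
by rewrite lee_fin.
Qed.

Lemma iint_nondecreasing_cvg (g : (X * Y -> \bar R)^nat) :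
  (forall n z, 0 <= g n z) -> (forall n, measurable_fun setT (g n)) ->
  (forall z, nondecreasing_seq (g ^~ z)) ->
  iint (fun z => limn (g ^~ z)) = limn (fun n => iint (g n)).
Proof.
move=> g0 mg ndg; rewrite /iint.
have inner x : \int[l x]_y limn (g ^~ (x, y)) = limn (fun n => \int[l x]_y g n (x, y)).
  apply: (monotone_convergence _ measurableT (g' := fun n y => g n (x, y))) => //.
  by move=> n; exact: measurable_fun_pair2.
under eq_integral do rewrite inner.
apply: (monotone_convergence _ measurableT (g' := fun n x => \int[l x]_y g n (x, y))).
- by move=> n; exact: measurable_fun_integral_uniformly_sigma_finite.
- by move=> n x _; apply: integral_ge0.
- move=> x _ a b ab; apply: ge0_le_integral => //; try exact: measurable_fun_pair2.
  by move=> y _; exact: ndg.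
Qed.

Lemma iint_comp_nnsfun_approx d'' (Z : measurableType d'') (F : Z -> \bar R)
    (mF : measurable_fun setT F) (phi : X * Y -> Z) :
  (forall z, 0 <= F z) -> measurable_fun setT phi ->
  iint (F \o phi) =
  limn (fun n => iint (fun z => (nnsfun_approx measurableT mF n (phi z))%:E)).
Proof.
move=> F0 mphi; rewrite -iint_nondecreasing_cvg//.
- congr iint; apply/funext => z /=.
  by apply/esym/cvg_lim => //; exact: cvg_nnsfun_approx.
- by move=> n z; rewrite lee_fin.
- by move=> n; apply/measurable_EFinP; exact: measurableT_comp.
- by move=> z a b ab; rewrite lee_fin; exact/lefP/nd_nnsfun_approx.
Qed.

End iterated_integral.

Section iint_ext_indic.
Import HBNNSimple.

Lemma iint_ext_indic d1 d2 d3 d4 d5 (X : measurableType d1) (Y : measurableType d2)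
    (X' : measurableType d3) (Y' : measurableType d4) (Z : measurableType d5)
    (R : realType) (m : {measure set X -> \bar R}) (l : R.-ker X ~> Y)
    (m' : {measure set X' -> \bar R}) (l' : R.-ker X' ~> Y')
    (phi : X * Y -> Z) (phi' : X' * Y' -> Z) :
  uniformly_sigma_finite l -> uniformly_sigma_finite l' ->
  measurable_fun setT phi -> measurable_fun setT phi' ->
  (forall C, measurable C -> iint m l (fun z => (\1_C (phi z) : R)%:E) =
                             iint m' l' (fun z => (\1_C (phi' z) : R)%:E)) ->
  forall F : Z -> \bar R, (forall z, (0 <= F z)%E) -> measurable_fun setT F ->
  iint m l (F \o phi) = iint m' l' (F \o phi').
Proof.
move=> l_sf l'_sf mphi mphi' eq_indic F F0 mF.
rewrite !(iint_comp_nnsfun_approx _ _ mF)//; congr (limn _); apply/funext => n.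
rewrite !iint_nnsfun_comp//; apply: eq_fsbigr => r _.
by rewrite eq_indic//; rewrite -[X in measurable X]setTI; exact: measurable_funP.
Qed.

End iint_ext_indic.

Section is_group.
Context (G : Type) (mul : G -> G -> G) (inv : G -> G) (e : G).
Hypothesis hg : is_group mul inv e.

Lemma is_group_invM a b : inv (mul a b) = mul (inv b) (inv a).
Proof.
have [mulA mul1g mulg1 mulVg mulgV] := hg.
have ab_ba : mul (mul a b) (mul (inv b) (inv a)) = e.
  by rewrite -mulA (mulA b) mulgV mul1g mulgV.
by rewrite -[LHS]mulg1 -ab_ba mulA mulVg mul1g.
Qed.

Lemma is_group_invK a : inv (inv a) = a.
Proof.
have [mulA mul1g mulg1 mulVg mulgV] := hg.
by rewrite -[LHS]mulg1 -(mulVg a) mulA mulVg mul1g.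
Qed.

End is_group.

Lemma continuous_measurable_borel (G H : ptopologicalType) (f : G -> H) :
  continuous f -> measurable_fun setT (f : borel_of G -> borel_of H).
Proof.
move=> /continuousP cf.
apply: (@measurability _ _ (borel_of G) (borel_of H) setT f (@open H)) => // _ [A oA <-].
by apply: sub_sigma_algebra; rewrite setTI; exact: cf.
Qed.

Section left_haar.
Local Open Scope ereal_scope.
Context (R : realType) (G : ptopologicalType) (mul : G -> G -> G) (inv : G -> G)
  (e : G).
Hypotheses (hg : is_group mul inv e) (cmul : continuous (fun p : G * G => mul p.1 p.2)).
Variable lam : {measure set (borel_of G) -> \bar R}.
Hypothesis hL : left_haar mul lam.

Lemma left_haar_integral_mul g (f : borel_of G -> \bar R) :
  (forall x, 0 <= f x) -> measurable_fun setT f ->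
  \int[lam]_h f (mul g h) = \int[lam]_h f h.
Proof.
have [mulA mul1g _ mulVg mulgV] := hg.
move=> f0 mf; apply/esym/ge0_integral_image => // [|A mA].
  apply: continuous_measurable_borel => x.
  have pair_cvg : (fun y => (g, y)) @ x --> (g, x).
    by apply: cvg_pair; [exact: cvg_cst|exact: cvg_id].
  exact: (cvg_comp _ _ pair_cvg (@cmul (g, x))).
have [invariant _ _] := hL; rewrite -(invariant (inv g) A mA); congr (lam _).
apply/seteqP; split => [y /= Agy|_ [x Ax <-] /=].
  by exists (mul g y) => //; rewrite mulA mulVg mul1g.
by rewrite mulA mulgV mul1g.
Qed.

End left_haar.

Lemma ereal_mul_fin_eq (R : realFieldType) (k c z : \bar R) :
  (0 < c < +oo)%E -> z \is a fin_num -> (k * c)%E = z -> k = (fine z / fine c)%:E.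
Proof.
move=> c_pos; have fc0 : (0 < fine c)%R := fine_gt0 c_pos.
have cfin : c \is a fin_num by case/andP: c_pos => c0 coo; rewrite ge0_fin_numE ?ltW.
rewrite -(fineK cfin); case: k => [r _ <-|/[swap] <-|/[swap] <-] /=.
- by rewrite mulrK// unitfE gt_eqF.
- by rewrite mulyr gtr0_sg// mul1e.
- by rewrite mulNyr gtr0_sg// mul1e.
Qed.

Section measurable_action.
Context (G : ptopologicalType) (mul : G -> G -> G) (e : G)
  (d : measure_display) (S : measurableType d) (act : G -> S -> S).
Hypothesis hA : measurable_action mul e act.

Lemma act_mul g h s : act (mul g h) s = act g (act h s).
Proof. by case: hA. Qed.

Lemma measurable_fun_act d' (T : measurableType d') (f : T -> borel_of G)
    (u : T -> S) : measurable_fun setT f -> measurable_fun setT u ->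
  measurable_fun setT (fun t => act (f t) (u t)).
Proof.
move=> mf mu; have [_ _ mact] := hA.
exact: (measurableT_comp mact (measurable_fun_pair mf mu)).
Qed.

Lemma measurable_fun_comp_act d' (T : measurableType d') (u : S -> T)
    (f : borel_of G -> borel_of G) s :
  measurable_fun setT u -> measurable_fun setT f ->
  measurable_fun setT (fun g => u (act (f g) s)).
Proof.
move=> mu mf; apply: measurableT_comp => //.
by apply: measurable_fun_act => //; exact: measurable_cst.
Qed.

Lemma proper_action_sigma_finite (R : realType)
    (lam : {measure set (borel_of G) -> \bar R}) (s : S) :
  proper_action lam act -> sigma_finite setT lam.
Proof.
move=> [B [mB _ cB fB]]; exists (fun n => (fun g : borel_of G => act g s) @^-1` B n).
  apply/seteqP; split => // g _.
  by have : [set: S] (act g s) by []; rewrite -cB => -[n _ Bn]; exists n.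
move=> n; split; last exact: fB.
by rewrite -[X in measurable X]setTI; apply: measurable_fun_act.
Qed.

End measurable_action.

Section orbit_integral.
Local Open Scope ereal_scope.
Context (R : realType) (G : ptopologicalType) (mul : G -> G -> G) (inv : G -> G)
  (e : G).
Hypotheses (hg : is_group mul inv e)
  (cmul : continuous (fun p : G * G => mul p.1 p.2)) (cinv : continuous inv).
Variable lam : {measure set (borel_of G) -> \bar R}.
Hypotheses (hL : left_haar mul lam) (lam_sf : sigma_finite setT lam).
Context (d : measure_display) (S : measurableType d) (act : G -> S -> S).
Hypothesis hA : measurable_action mul e act.

Local Notation oint := (orbit_int lam act).

Let minv : measurable_fun setT (inv : borel_of G -> borel_of G).
Proof. exact: continuous_measurable_borel. Qed.

Lemma act_invK g s : act (inv g) (act g s) = s.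
Proof. by have [act1 _ _] := hA; have [_ _ _ mulVg _] := hg; rewrite -(act_mul hA) mulVg act1. Qed.

Lemma measurable_orbit_int (a : S -> \bar R) : (forall x, 0 <= a x) ->
  measurable_fun setT a -> measurable_fun setT (fun x => oint x a).
Proof.
move=> a0 ma; apply: (measurable_fun_integral_sigma_finite lam_sf
  (f := fun p : S * borel_of G => a (act p.2 p.1))) => //.
by apply: measurableT_comp => //; apply: (measurable_fun_act hA).
Qed.

Definition rev_orbit_int (b : S -> \bar R) x := \int[lam]_g b (act (inv g) x).

Lemma rev_orbit_int_act (b : S -> \bar R) g x : (forall x, 0 <= b x) ->
  measurable_fun setT b -> rev_orbit_int b (act g x) = rev_orbit_int b x.
Proof.
move=> b0 mb; rewrite /rev_orbit_int.
rewrite -(left_haar_integral_mul hg cmul hL (inv g) (f := fun h => b (act (inv h) x)))//.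
  by apply: eq_integral => h _; rewrite (is_group_invM hg) (is_group_invK hg) (act_mul hA).
apply: measurableT_comp => //; apply: (measurable_fun_act hA) => //.
Qed.

Lemma rev_orbit_intM (a b : S -> \bar R) x :
  (forall x, 0 <= a x) -> measurable_fun setT a ->
  (forall x, 0 <= b x) -> measurable_fun setT b ->
  rev_orbit_int b x * oint x a = \int[lam]_h (oint (act h x) a * b (act h x)).
Proof.
move=> a0 ma b0 mb.
have mact2 (f1 f2 : borel_of G * borel_of G -> borel_of G) :
    measurable_fun setT f1 -> measurable_fun setT f2 ->
    measurable_fun setT (fun p => act (f1 p) (act (f2 p) x)).
  move=> mf1 mf2; apply: (measurable_fun_act hA) => //.
  by apply: (measurable_fun_act hA) => //; exact: measurable_cst.
have mF : measurable_fun setT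
    (fun p : borel_of G * borel_of G => a (act p.1 x) * b (act (inv p.2) (act p.1 x))).
  apply: emeasurable_funM; apply: measurableT_comp => //.
    by apply: (measurable_fun_act hA) => //; exact: measurable_cst.
  by apply: mact2 => //; exact: measurableT_comp.
have mF' : measurable_fun setT
    (fun p : borel_of G * borel_of G => a (act p.2 (act p.1 x)) * b (act p.1 x)).
  apply: emeasurable_funM; apply: measurableT_comp => //; first exact: mact2.
  by apply: (measurable_fun_act hA) => //; exact: measurable_cst.
transitivity (\int[lam]_h \int[lam]_g (a (act h x) * b (act (inv g) (act h x)))).
  rewrite muleC /orbit_int -ge0_integralZr//; last 2 first.
  - exact: (measurable_fun_comp_act hA).
  - by apply: integral_ge0.
  apply: eq_integral => h _; rewrite -(rev_orbit_int_act h x b0 mb) -ge0_integralZl//.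
  exact: (measurable_fun_comp_act hA).
rewrite (tonelli_sigma_finite lam_sf lam_sf mF) => [|[? ?]]; last exact: mule_ge0.
transitivity (\int[lam]_g \int[lam]_h (a (act g (act h x)) * b (act h x))).
  apply: eq_integral => g _.
  rewrite -(left_haar_integral_mul hg cmul hL g
    (f := fun h => a (act h x) * b (act (inv g) (act h x)))) => [|h|]; last 2 first.
  - exact: mule_ge0.
  - exact: (measurable_fun_pair1 g mF).
  by apply: eq_integral => h _; rewrite !(act_mul hA) act_invK.
rewrite -(tonelli_sigma_finite lam_sf lam_sf mF') => [|[? ?]]; last exact: mule_ge0.
apply: eq_integral => h _; rewrite /orbit_int -ge0_integralZr//.
exact: (measurable_fun_comp_act hA).
Qed.

Definition orbit_density (v w : S -> \bar R) y :=
  w y * ((fine (oint y v))^-1)%:E.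

Section orbit_density.
Variables v w : S -> \bar R.
Hypotheses (v0 : forall x, 0 <= v x) (mv : measurable_fun setT v).
Hypotheses (w0 : forall x, 0 <= w x) (mw : measurable_fun setT w).
Hypothesis v_fin : forall x, 0 < oint x v < +oo.

Lemma orbit_density_ge0 y : 0 <= orbit_density v w y.
Proof.
apply: mule_ge0 => //; rewrite lee_fin invr_ge0.
by apply: fine_ge0; apply: integral_ge0.
Qed.

Lemma measurable_orbit_density : measurable_fun setT (orbit_density v w).
Proof.
apply: emeasurable_funM => //; apply/measurable_EFinP.
have -> : (fun y => (fine (oint y v))^-1)%R = (fun y => powR (fine (oint y v)) (-1))%R.
  by apply/funext => y; rewrite powR_inv1//; apply/fine_ge0/integral_ge0.
apply: (measurableT_comp (@measurable_powR R (-1))).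
exact: (measurableT_comp (fine_measurable measurableT) (measurable_orbit_int v0 mv)).
Qed.

Lemma orbit_int_mul_density y : oint y v * orbit_density v w y = w y.
Proof.
have /andP[vy0 vyoo] := v_fin y.
have vyfin : oint y v \is a fin_num by rewrite ge0_fin_numE ?ltW.
rewrite /orbit_density muleCA -{1}(fineK vyfin) -EFinM mulfV ?mule1//.
exact/lt0r_neq0/fine_gt0/v_fin.
Qed.

Lemma rev_orbit_int_density x : oint x w < +oo ->
  rev_orbit_int (orbit_density v w) x = (fine (oint x w) / fine (oint x v))%:E.
Proof.
move=> w_fin; apply: ereal_mul_fin_eq.
- exact: v_fin.
- by rewrite ge0_fin_numE//; exact: integral_ge0.
rewrite rev_orbit_intM//; [|exact: orbit_density_ge0|exact: measurable_orbit_density].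
by apply: eq_integral => h _; rewrite orbit_int_mul_density.
Qed.

Lemma rev_orbit_int_density_const (O : set S) :
  orbit_representatives act O -> (forall x, oint x w < +oo) ->
  (forall b b', O b -> O b' ->
    (fine (oint b w) / fine (oint b v) = fine (oint b' w) / fine (oint b' v))%R) ->
  forall x y, rev_orbit_int (orbit_density v w) x = rev_orbit_int (orbit_density v w) y.
Proof.
move=> [_ rep] w_fin ratio x y.
have [bx [[Obx [gx gxE]] _]] := rep x; have [by_ [[Oby [gy gyE]] _]] := rep y.
have [b0 mb] := (orbit_density_ge0, measurable_orbit_density).
rewrite -(rev_orbit_int_act gx x b0 mb) -(rev_orbit_int_act gy y b0 mb) gxE gyE.
by rewrite !rev_orbit_int_density// (ratio bx by_).
Qed.

End orbit_density.

Section invariant_measure_kernel.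
Variables (mu : {measure set S -> \bar R}) (gam : R.-ker S ~> S).
Hypotheses (mu_sf : sigma_finite setT mu) (mu_inv : invariant_measure act mu).
Hypotheses (gam_sf : uniformly_sigma_finite gam) (gam_inv : invariant_kernel act gam).

Lemma iint_act g (F : S * S -> \bar R) : (forall z, 0 <= F z) -> measurable_fun setT F ->
  iint mu gam (fun z => F (act g z.1, act g z.2)) = iint mu gam F.
Proof.
move=> F0 mF; have [_ _ mact] := hA.
have mg : measurable_fun setT (act g) by exact: (measurableT_comp mact (pair1_measurable _)).
transitivity (\int[mu]_s \int[gam (act g s)]_t F (act g s, t)).
  apply: eq_integral => s _; apply/esym/ge0_integral_image => // [A mA|].
    by rewrite gam_inv.
  exact: (measurable_fun_pair2 _ mF).
apply/esym/ge0_integral_image => // [A mA|x|].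
- by rewrite mu_inv.
- exact: integral_ge0.
- exact: measurable_fun_integral_uniformly_sigma_finite.
Qed.

Lemma iint_haar_tonelli (F : G -> S * S -> \bar R) :
  (forall h z, 0 <= F h z) ->
  measurable_fun setT (fun p : borel_of G * (S * S) => F p.1 p.2) ->
  iint mu gam (fun z => \int[lam]_h F h z) = \int[lam]_h iint mu gam (F h).
Proof.
move=> F0 mF.
have mF' : measurable_fun setT (fun q : (S * borel_of G) * S => F q.1.2 (q.1.1, q.2)).
  apply: (measurableT_comp mF (g := fun q : (S * borel_of G) * S => (q.1.2, (q.1.1, q.2)))).
  apply: measurable_fun_pair; first exact: (measurableT_comp measurable_snd measurable_fst).
  by apply: measurable_fun_pair => //; exact: (measurableT_comp measurable_fst measurable_fst).
transitivity (\int[mu]_s \int[lam]_h \int[gam s]_t F h (s, t)).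
  apply: eq_integral => s _.
  apply: (tonelli_sigma_finite (uniformly_sigma_finite_measure gam_sf s) lam_sf
    (f := fun p : S * borel_of G => F p.2 (s, p.1))) => [|p]; last exact: F0.
  apply: (measurableT_comp mF (g := fun p : S * borel_of G => (p.2, (s, p.1)))).
  apply: measurable_fun_pair; first exact: measurable_snd.
  by apply: measurable_fun_pair; [exact: measurable_cst|exact: measurable_fst].
have mH : measurable_fun setT
    (fun p : S * borel_of G => \int[gam p.1]_t F p.2 (p.1, t)).
  exact: (measurable_fun_integral_uniformly_sigma_finite
    (uniformly_sigma_finite_kfst (borel_of G) gam_sf) (F := fun q => F q.1.2 (q.1.1, q.2))
    (fun q => F0 _ _) mF').
by rewrite (tonelli_sigma_finite mu_sf lam_sf mH) // => p; exact: integral_ge0.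
Qed.

Lemma iint_haar_act (F : G -> S * S -> \bar R) :
  (forall h z, 0 <= F h z) ->
  measurable_fun setT (fun p : borel_of G * (S * S) => F p.1 p.2) ->
  iint mu gam (fun z => \int[lam]_h F h (act h z.1, act h z.2)) =
  iint mu gam (fun z => \int[lam]_h F h z).
Proof.
move=> F0 mF.
have mFact : measurable_fun setT
    (fun p : borel_of G * (S * S) => F p.1 (act p.1 p.2.1, act p.1 p.2.2)).
  apply: (measurableT_comp mF (g := fun p : borel_of G * (S * S) =>
    (p.1, (act p.1 p.2.1, act p.1 p.2.2)))).
  apply: measurable_fun_pair => //.
  by apply: measurable_fun_pair; apply: (measurable_fun_act hA) => //;
    [exact: (measurableT_comp measurable_fst measurable_snd)|
     exact: (measurableT_comp measurable_snd measurable_snd)].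
rewrite (iint_haar_tonelli (F := fun h z => F h (act h z.1, act h z.2)) _ mFact);
  last by move=> h z; exact: F0.
rewrite (iint_haar_tonelli F0 mF); apply: eq_integral => h _.
exact: (iint_act h (F0 h) (measurable_fun_pair2 h mF)).
Qed.

Lemma iint_orbit_int_transfer (v b : S -> \bar R) (r : S * S -> S) (m : S * S -> \bar R) :
  (forall x, 0 <= v x) -> measurable_fun setT v ->
  (forall x, 0 <= b x) -> measurable_fun setT b ->
  measurable_fun setT r -> (forall h z, r (act h z.1, act h z.2) = act h (r z)) ->
  (forall z, 0 <= m z) -> measurable_fun setT m -> invariant_fun2 act m ->
  iint mu gam (fun z => oint z.2 v * b (r z) * m z) =
  iint mu gam (fun z => v z.2 * rev_orbit_int b (r z) * m z).
Proof.
move=> v0 mv b0 mb mr r_act m0 mm m_inv.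
pose F h z := v z.2 * b (act (inv h) (r z)) * m z.
have F0 h z : 0 <= F h z by rewrite !mule_ge0.
have mF : measurable_fun setT (fun p : borel_of G * (S * S) => F p.1 p.2).
  apply: emeasurable_funM; [apply: emeasurable_funM|exact: measurableT_comp].
    exact: (measurableT_comp mv (measurableT_comp measurable_snd measurable_snd)).
  apply: (measurableT_comp mb); apply: (measurable_fun_act hA).
    exact: (measurableT_comp minv measurable_fst).
  exact: (measurableT_comp mr measurable_snd).
have F_act h z : F h (act h z.1, act h z.2) = v (act h z.2) * b (r z) * m z.
  by case: z => s t; rewrite /F /= (r_act h (s, t)) act_invK m_inv.
transitivity (iint mu gam (fun z => \int[lam]_h F h (act h z.1, act h z.2))).
  apply: eq_integral => s _; apply: eq_integral => t _.
  under eq_integral do rewrite F_act.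
  rewrite -!ge0_integralZr//.
  - apply: emeasurable_funM => //; exact: (measurable_fun_comp_act hA).
  - by move=> h _; exact: mule_ge0.
  - exact: (measurable_fun_comp_act hA).
rewrite (iint_haar_act F0 mF); apply: eq_integral => s _; apply: eq_integral => t _.
have mbr : measurable_fun setT (fun h : borel_of G => b (act (inv h) (r (s, t)))).
  exact: (measurableT_comp mb (measurable_fun_act hA minv (measurable_cst _))).
rewrite /F /rev_orbit_int -ge0_integralZl// -ge0_integralZr//.
- exact: emeasurable_funM.
- by move=> h _; exact: mule_ge0.
Qed.

End invariant_measure_kernel.

Lemma iint_Delta_v (mu nu : {measure set S -> \bar R}) (gam del : R.-ker S ~> S)
    (O : set S) (v w : S -> \bar R) (m : S * S -> \bar R) :
  sigma_finite setT mu -> invariant_measure act mu ->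
  uniformly_sigma_finite gam -> invariant_kernel act gam ->
  uniformly_sigma_finite del ->
  (forall C, measurable C -> iint mu gam (fun z => (\1_C z : R)%:E) =
                             iint nu del (fun z => (\1_C (swap z) : R)%:E)) ->
  orbit_representatives act O ->
  (forall x, 0 <= v x) -> measurable_fun setT v ->
  (forall x, 0 <= w x) -> measurable_fun setT w ->
  (forall x, 0 < oint x v < +oo) -> (forall x, oint x w < +oo) ->
  (forall b b', O b -> O b' ->
    (fine (oint b w) / fine (oint b v) = fine (oint b' w) / fine (oint b' v))%R) ->
  (forall z, 0 <= m z) -> measurable_fun setT m -> invariant_fun2 act m ->
  iint mu gam (fun z => Delta_v lam act v z.1 z.2 * w z.1 * m z) =
  iint nu del (fun z => w z.1 * m (swap z)).
Proof.
move=> mu_sf mu_inv gam_sf gam_inv del_sf transport hO v0 mv w0 mw v_fin w_fin ratio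
  m0 mm m_inv.
have [b0 mb] := (orbit_density_ge0 v0 w0, measurable_orbit_density v0 mv mw).
have -> : iint mu gam (fun z => Delta_v lam act v z.1 z.2 * w z.1 * m z) =
    iint mu gam (fun z => oint z.2 v * orbit_density v w z.1 * m z).
  apply: eq_integral => s _; apply: eq_integral => t _ /=; congr (_ * _).
  have /andP[vt0 vt_fin] := v_fin t.
  rewrite /Delta_v /orbit_density -[oint t v in RHS]fineK ?ge0_fin_numE ?ltW//.
  by rewrite EFinM -muleA [_ * w s]muleC.
have rev_const := rev_orbit_int_density_const v0 mv w0 mw v_fin hO w_fin ratio.
rewrite (iint_orbit_int_transfer mu_sf mu_inv gam_sf gam_inv (r := fst) v0 mv b0 mb) //.
transitivity (iint mu gam (fun z => v z.2 * rev_orbit_int (orbit_density v w) z.2 * m z)).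
  by apply: eq_integral => s _; apply: eq_integral => t _; rewrite (rev_const s t).
rewrite -(iint_orbit_int_transfer mu_sf mu_inv gam_sf gam_inv (r := snd) v0 mv b0 mb) //.
have -> : iint mu gam (fun z => oint z.2 v * orbit_density v w z.2 * m z) =
    iint mu gam (fun z => w z.2 * m z).
  by apply: eq_integral => s _; apply: eq_integral => t _; rewrite orbit_int_mul_density.
have wm0 z : 0 <= w z.2 * m z by exact: mule_ge0.
have mwm : measurable_fun setT (fun z : S * S => w z.2 * m z).
  exact: emeasurable_funM (measurableT_comp mw measurable_snd) mm.
exact: (iint_ext_indic gam_sf del_sf (@measurable_id _ _ setT) (@measurable_swap _ _ S S)
  transport wm0 mwm).
Qed.

End orbit_integral.

Unset Implicit Arguments.

Theorem proposition6p7 (R : realType) (G : ptopologicalType)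
  (mul : G -> G -> G) (inv : G -> G) (e : G)
  (lam : {measure set (borel_of G) -> \bar R})
  (d : measure_display) (S : measurableType d) (act : G -> S -> S) (O : set S)
  (mu nu : {measure set S -> \bar R}) (gam del : R.-ker S ~> S)
  (v w : S -> \bar R) (m : S * S -> \bar R) :
  lcsc_group mul inv e -> left_haar mul lam -> borel_space R S ->
  measurable_action mul e act -> proper_action lam act ->
  orbit_representatives act O ->
  sigma_finite setT mu -> sigma_finite setT nu ->
  invariant_measure act mu -> invariant_measure act nu ->
  sigma_finite_kernel_on gam -> sigma_finite_kernel_on del ->
  invariant_kernel act gam -> invariant_kernel act del ->
  (forall C : set (S * S), measurable C ->
     (\int[mu]_s \int[gam s]_t (\1_C (s, t) : R)%:E
      = \int[nu]_t \int[del t]_s (\1_C (s, t) : R)%:E)%E) ->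
  measurable_fun setT v -> (forall s, (0 <= v s)%E) ->
  measurable_fun setT w -> (forall s, (0 <= w s)%E) ->
  (forall s, (0 < orbit_int lam act s v < +oo)%E) ->
  (forall s, (0 < orbit_int lam act s w < +oo)%E) ->
  (forall b b', O b -> O b' ->
     fine (orbit_int lam act b w) / fine (orbit_int lam act b v)
     = fine (orbit_int lam act b' w) / fine (orbit_int lam act b' v)) ->
  measurable_fun setT m -> (forall p, (0 <= m p)%E) -> invariant_fun2 act m ->
  (\int[mu]_s \int[gam s]_t (Delta_v lam act v s t * w s * m (s, t))
   = \int[nu]_t \int[del t]_s (w t * m (s, t)))%E.
Proof.
move=> [hg [cmul cinv _ _ _]] hL _ hA hP hO mu_sf _ mu_inv _ gam_sf del_sf gam_inv _
  transport mv v0 mw w0 hv hw ratio mm m0 m_inv.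
have [[s0 _]|S0] := pselect (exists s : S, True); last first.
  have -> : [set: S] = set0 by apply/seteqP; split => // s _; apply: S0; exists s.
  by rewrite !integral_set0.
have lam_sf := proper_action_sigma_finite hA s0 hP.
have w_fin x : (orbit_int lam act x w < +oo)%E by have /andP[] := hw x.
exact: (iint_Delta_v hg cmul cinv hL lam_sf hA mu_sf mu_inv gam_sf gam_inv del_sf
  transport hO v0 mv w0 mw hv w_fin ratio m0 mm m_inv).
Qed.
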